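(* For every instance of a rule of $\mathsf{G4iSLt}$ with conclusion $S_0$ and premises $S_1,\dots,S_n$, we have $\Theta(S_i)\prec\Theta(S_0)$ for every $1\le i\le n$, where $\prec$ is the shortlex order.
   Context: Formulas are built by the grammar $\varphi ::= p \mid \bot \mid \varphi\land\varphi \mid \varphi\lor\varphi \mid \varphi\to\varphi \mid \Box\varphi$, with $p$ ranging over a countably infinite set of propositional variables. For a multiset $\Gamma$, $\Box\Gamma=\{\Box\psi:\psi\in\Gamma\}$; a boxed formula is one of the form $\Box\psi$. Weight: $w(\bot)=w(p)=1$; $w(\psi\lor\chi)=w(\psi\to\chi)=w(\psi)+w(\chi)+1$; $w(\psi\land\chi)=w(\psi)+w(\chi)+2$; $w(\Box\psi)=w(\psi)+1$. For a finite multiset $\Delta$ of formulas whose maximal weight is $n$, let $L(\Delta)$ be the list $[c_n,c_{n-1},\dots,c_1]$ of natural numbers of length $n$ where $c_m$ is the number of occurrences in $\Delta$ of formulas of weight $m$ (so the leftmost entry counts formulas of maximal weight; $L$ of the empty multiset is the empty list). For a sequent $\Gamma\Rightarrow\chi$, write $\Gamma=\Gamma_0,\Box\Gamma_1$ where $\Gamma_0$ contains no boxed formula, and set $\Theta(\Gamma\Rightarrow\chi)=L(\Gamma_0\uplus\Gamma_1\uplus\{\chi\})$ (the antecedent's outermost boxes are removed). The shortlex order on lists of natural numbers: $l_0\prec l_1$ iff either $\mathrm{length}(l_0)<\mathrm{length}(l_1)$, or the lengths are equal and $l_0$ is lexicographically smaller than $l_1$ (i.e. at the first position $j$ where they differ,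 the entry of $l_0$ is smaller). A sequent is $\Gamma\Rightarrow\chi$ with $\Gamma$ a finite multiset of formulas and $\chi$ a formula. The sequent calculus $\mathsf{G4iSLt}$ has the following rules, where $p$ is a propositional variable and $\Phi$ always denotes a multiset containing no boxed formula: (⊥L) $\bot,\Gamma\Rightarrow\chi$ (no premise); (IdP) $\Gamma,p\Rightarrow p$ (no premise); (∧L) from $\Gamma,\varphi,\psi\Rightarrow\chi$ infer $\Gamma,\varphi\land\psi\Rightarrow\chi$; (∧R) from $\Gamma\Rightarrow\varphi$ and $\Gamma\Rightarrow\psi$ infer $\Gamma\Rightarrow\varphi\land\psi$; (∨L) from $\Gamma,\varphi\Rightarrow\chi$ and $\Gamma,\psi\Rightarrow\chi$ infer $\Gamma,\varphi\lor\psi\Rightarrow\chi$; (∨R$_i$), $i\in\{1,2\}$: from $\Gamma\Rightarrow\varphi_i$ infer $\Gamma\Rightarrow\varphi_1\lor\varphi_2$; (p→L) from $\Gamma,p,\varphi\Rightarrow\chi$ infer $\Gamma,p,p\to\varphi\Rightarrow\chi$; (→R) from $\Gamma,\varphi\Rightarrow\psi$ infer $\Gamma\Rightarrow\varphi\to\psi$; (□→L) from $\Phi,\Gamma,\psi,\Box\varphi\Rightarrow\varphi$ and $\Phi,\Box\Gamma,\psi\Rightarrow\chi$ infer $\Phi,\Box\Gamma,\Box\varphi\to\psi\Rightarrow\chi$; (SLtR) from $\Phi,\Gamma,\Box\varphi\Rightarrow\varphi$ infer $\Phi,\Box\Gamma\Rightarrow\Box\varphi$; (∧→L) from $\Gamma,\varphi\to(\psi\to\chi)\Rightarrow\delta$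 infer $\Gamma,(\varphi\land\psi)\to\chi\Rightarrow\delta$; (∨→L) from $\Gamma,\varphi\to\chi,\psi\to\chi\Rightarrow\delta$ infer $\Gamma,(\varphi\lor\psi)\to\chi\Rightarrow\delta$; (→→L) from $\Gamma,\psi\to\chi\Rightarrow\varphi\to\psi$ and $\Gamma,\chi\Rightarrow\delta$ infer $\Gamma,(\varphi\to\psi)\to\chi\Rightarrow\delta$. *)

From Stdlib Require Import List Arith Permutation.
Import ListNotations.

Inductive form : Type :=
| Var : nat -> form
| Bot : form
| And : form -> form -> form
| Or : form -> form -> form
| Imp : form -> form -> form
| Box : form -> form.

Fixpoint weight (f : form) : nat :=
  match f with
  | Var _ | Bot => 1
  | Or a b | Imp a b => weight a + weight b + 1
  | And a b => weight a + weight b + 2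
  | Box a => weight a + 1
  end.

Definition is_boxed (f : form) : bool :=
  match f with Box _ => true | _ => false end.

(* multisets are represented by lists; all notions below are invariant
   under permutation, and rule instances are closed under permutation. *)
Definition no_boxed (Phi : list form) : Prop :=
  forall f, In f Phi -> is_boxed f = false.

Definition max_weight (D : list form) : nat :=
  fold_right (fun f m => Nat.max (weight f) m) 0 D.

Definition count_weight (m : nat) (D : list form) : nat :=
  length (filter (fun f => Nat.eqb (weight f) m) D).

Definition L (D : list form) : list nat :=
  map (fun m => count_weight m D) (rev (seq 1 (max_weight D))).

Definition sequent : Type := (list form * form)%type.

(* Gamma = Gamma0, Box Gamma1 with Gamma0 box-free *)
Definition Gamma0 (G : list form) : list form :=
  filter (fun f => negb (is_boxed f)) G.
Definition Gamma1 (G : list form) : list form :=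
  flat_map (fun f => match f with Box a => [a] | _ => [] end) G.

Definition Theta (s : sequent) : list nat :=
  L (Gamma0 (fst s) ++ Gamma1 (fst s) ++ [snd s]).

Fixpoint lex_lt (l0 l1 : list nat) : Prop :=
  match l0, l1 with
  | x :: r0, y :: r1 => x < y \/ (x = y /\ lex_lt r0 r1)
  | _, _ => False
  end.

Definition shortlex_lt (l0 l1 : list nat) : Prop :=
  length l0 < length l1 \/ (length l0 = length l1 /\ lex_lt l0 l1).

Inductive rule_inst : list sequent -> sequent -> Prop :=
| R_BotL G c : rule_inst [] (Bot :: G, c)
| R_IdP G p : rule_inst [] (G ++ [Var p], Var p)
| R_AndL G a b c : rule_inst [(G ++ [a; b], c)] (G ++ [And a b], c)
| R_AndR G a b : rule_inst [(G, a); (G, b)] (G, And a b)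
| R_OrL G a b c : rule_inst [(G ++ [a], c); (G ++ [b], c)] (G ++ [Or a b], c)
| R_OrR1 G a b : rule_inst [(G, a)] (G, Or a b)
| R_OrR2 G a b : rule_inst [(G, b)] (G, Or a b)
| R_pImpL G p a c :
    rule_inst [(G ++ [Var p; a], c)] (G ++ [Var p; Imp (Var p) a], c)
| R_ImpR G a b : rule_inst [(G ++ [a], b)] (G, Imp a b)
| R_BoxImpL Phi G a b c : no_boxed Phi ->
    rule_inst [(Phi ++ G ++ [b; Box a], a); (Phi ++ map Box G ++ [b], c)]
              (Phi ++ map Box G ++ [Imp (Box a) b], c)
| R_SLtR Phi G a : no_boxed Phi ->
    rule_inst [(Phi ++ G ++ [Box a], a)] (Phi ++ map Box G, Box a)
| R_AndImpL G a b c d :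
    rule_inst [(G ++ [Imp a (Imp b c)], d)] (G ++ [Imp (And a b) c], d)
| R_OrImpL G a b c d :
    rule_inst [(G ++ [Imp a c; Imp b c], d)] (G ++ [Imp (Or a b) c], d)
| R_ImpImpL G a b c d :
    rule_inst [(G ++ [Imp b c], Imp a b); (G ++ [c], d)]
              (G ++ [Imp (Imp a b) c], d).

Definition seq_equiv (s t : sequent) : Prop :=
  Permutation (fst s) (fst t) /\ snd s = snd t.

Definition G4iSLt_rule (ps : list sequent) (c : sequent) : Prop :=
  exists ps' c', rule_inst ps' c' /\ Forall2 seq_equiv ps ps' /\ seq_equiv c c'.

From Stdlib Require Import List Arith Lia Permutation.
Import ListNotations.

(* It is more convenient to work
   with the "upper counts" [upcount weight m D], the number of formulas of
   weight at least [m]: if the upper counts of [D1] are bounded by those of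
   [D0] at every level [m >= k], and strictly at level [k >= 1], then
   [L D1] precedes [L D0] in the shortlex order ([shortlex_of_upcount]).

   For a sequent, the upper counts of its Theta-multiset are computed
   directly from the sequent by letting a boxed antecedent formula [Box a]
   count with the weight of [a] ([theta_upcount]).  In every rule instance
   the premises are obtained from the conclusion by replacing the principal
   formula, of weight [k], by strictly lighter formulas, dropping formulas,
   or unboxing antecedent formulas (which never increases their Theta
   weight).  Hence the upper counts of each premise are bounded by those of
   the conclusion at every level [m >= k], and strictly at level [k]
   ([rule_descent]); we call this [descends_at k].  Descent is invariant
   under permuting antecedents, which gives the theorem for rules taken up
   to multiset equality ([theta_lt_of_descends], [descends_at_equiv]). *)

Definition upcount (w : form -> nat) (m : nat) (D : list form) : nat :=
  length (filter (fun f => m <=? w f) D).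

Lemma upcount_app w m A B : upcount w m (A ++ B) = upcount w m A + upcount w m B.
Proof. unfold upcount. now rewrite filter_app, length_app. Qed.

Lemma upcount_nil w m : upcount w m [] = 0.
Proof. reflexivity. Qed.

Lemma upcount_cons w m f D :
  upcount w m (f :: D) = (if m <=? w f then 1 else 0) + upcount w m D.
Proof. unfold upcount; cbn. now destruct (m <=? w f). Qed.

Lemma upcount_perm w m A B : Permutation A B -> upcount w m A = upcount w m B.
Proof.
  unfold upcount; induction 1; cbn [filter]; try lia.
  - destruct (m <=? w x); cbn [length]; lia.
  - destruct (m <=? w x), (m <=? w y); reflexivity.
Qed.

Lemma upcount_step m D : upcount weight m D = count_weight m D + upcount weight (S m) D.
Proof.
  unfold upcount, count_weight; induction D as [|f D IH]; cbn [filter length]; auto.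
  destruct (Nat.leb_spec m (weight f)), (Nat.eqb_spec (weight f) m),
    (Nat.leb_spec (S m) (weight f)); cbn [length]; lia.
Qed.

Lemma upcount_pos_iff m D :
  1 <= m -> (0 < upcount weight m D <-> m <= max_weight D).
Proof.
  intros Hm; unfold upcount; induction D as [|f D IH]; cbn [filter]; [cbn; lia|].
  change (max_weight (f :: D)) with (Nat.max (weight f) (max_weight D)).
  destruct (Nat.leb_spec m (weight f)); cbn [length]; [split; lia|].
  rewrite IH; lia.
Qed.

Lemma upcount_above_max m D : max_weight D < m -> upcount weight m D = 0.
Proof.
  intros H. destruct (Nat.eq_dec (upcount weight m D) 0) as [|Hnz]; auto.
  assert (0 < upcount weight m D) as Hpos by lia.
  apply upcount_pos_iff in Hpos; lia.
Qed.

Section UpcountOrder.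

Variables (D1 D0 : list form) (k : nat).
Hypothesis k_pos : 1 <= k.
Hypothesis upcount_le : forall m, k <= m -> upcount weight m D1 <= upcount weight m D0.
Hypothesis upcount_lt : upcount weight k D1 < upcount weight k D0.

Lemma lex_of_upcount j : k <= j ->
  upcount weight (S j) D1 = upcount weight (S j) D0 ->
  lex_lt (map (fun m => count_weight m D1) (rev (seq 1 j)))
         (map (fun m => count_weight m D0) (rev (seq 1 j))).
Proof.
  induction j as [|j IH]; intros Hj Heq; [lia|].
  rewrite seq_S, rev_app_distr; cbn.
  pose proof (upcount_step (S j) D1); pose proof (upcount_step (S j) D0).
  pose proof (upcount_le (S j) Hj).
  destruct (Nat.lt_ge_cases (upcount weight (S j) D1) (upcount weight (S j) D0)).
  - left; lia.
  - right; split; [lia|].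
    apply IH; [destruct (Nat.eq_dec k (S j)); subst; lia | lia].
Qed.

Lemma max_weight_le_of_upcount : max_weight D1 <= max_weight D0.
Proof.
  destruct (Nat.le_gt_cases (max_weight D1) (max_weight D0)) as [|Hgt]; auto.
  pose proof (upcount_above_max _ D0 Hgt) as H0.
  assert (0 < upcount weight (max_weight D1) D1) by (apply upcount_pos_iff; lia).
  destruct (Nat.le_gt_cases k (max_weight D1)) as [Hk|Hk].
  - pose proof (upcount_le _ Hk); lia.
  - pose proof (upcount_above_max k D0); lia.
Qed.

(* The order criterion: equal lengths force the lexicographic comparison,
   started at the top level where both upper counts vanish. *)
Lemma shortlex_of_upcount : shortlex_lt (L D1) (L D0).
Proof.
  unfold shortlex_lt, L; rewrite !length_map, !length_rev, !length_seq.
  assert (k <= max_weight D0).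
  { apply upcount_pos_iff; lia. }
  pose proof max_weight_le_of_upcount.
  destruct (Nat.eq_dec (max_weight D1) (max_weight D0)) as [E|]; [|left; lia].
  right; split; [exact E|]; rewrite E.
  apply lex_of_upcount; auto.
  rewrite !upcount_above_max; lia.
Qed.

End UpcountOrder.

(* The weight a formula contributes to Theta when it occurs in an
   antecedent: outermost boxes are removed. *)
Definition theta_weight (f : form) : nat :=
  match f with Box a => weight a | _ => weight f end.

Lemma theta_weight_le_box f : theta_weight f <= theta_weight (Box f).
Proof. destruct f; cbn; lia. Qed.

Lemma theta_weight_le f : theta_weight f <= weight f.
Proof. destruct f; cbn; lia. Qed.

Definition seq_upcount (m : nat) (s : sequent) : nat :=
  upcount theta_weight m (fst s) + upcount weight m [snd s].

Lemma theta_upcount m s :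
  upcount weight m (Gamma0 (fst s) ++ Gamma1 (fst s) ++ [snd s]) = seq_upcount m s.
Proof.
  unfold seq_upcount; rewrite !upcount_app, Nat.add_assoc; f_equal.
  induction (fst s) as [|f G IH]; [reflexivity|].
  unfold Gamma0, Gamma1, upcount in *; destruct f; cbn in *;
    destruct (m <=? _); cbn [length]; lia.
Qed.

Lemma seq_upcount_equiv m s t : seq_equiv s t -> seq_upcount m s = seq_upcount m t.
Proof.
  intros [Hp He]; unfold seq_upcount; now rewrite He, (upcount_perm _ m _ _ Hp).
Qed.

Lemma upcount_unbox m G : upcount theta_weight m G <= upcount theta_weight m (map Box G).
Proof.
  unfold upcount; induction G as [|f G IH]; cbn [map filter]; auto.
  pose proof (theta_weight_le_box f).
  destruct (Nat.leb_spec m (theta_weight f)), (Nat.leb_spec m (theta_weight (Box f)));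
    cbn [length]; lia.
Qed.

Definition descends_at (k : nat) (s c : sequent) : Prop :=
  1 <= k /\ (forall m, k <= m -> seq_upcount m s <= seq_upcount m c) /\
  seq_upcount k s < seq_upcount k c.

(* Choose the principal weight as level; the remaining goal is arithmetic on
   the counts of the context and single-formula indicators, where every
   non-principal formula that changed is strictly lighter. *)
Ltac descend k :=
  exists k; unfold descends_at, seq_upcount; cbn [fst snd];
  split; [cbn; lia|];
  split; [intros ?m ?Hm|]; rewrite ?upcount_app;
  repeat match goal with |- context [upcount theta_weight ?m (map Box ?G)] =>
    generalize (upcount_unbox m G); generalize (upcount theta_weight m (map Box G));
    intros end;
  rewrite ?upcount_cons, ?upcount_nil; cbn [theta_weight weight] in *;
  repeat match goal with |- context [theta_weight ?f] =>
    generalize (theta_weight_le f); generalize (theta_weight f); intros end;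
  repeat match goal with |- context [?a <=? ?b] => destruct (Nat.leb_spec a b) end;
  lia.

(* Every premise of a rule instance descends at the weight of the
   principal formula. *)
Lemma rule_descent ps c : rule_inst ps c -> forall s, In s ps -> exists k, descends_at k s c.
Proof.
  intros H; destruct H; intros s Hs; cbn in Hs;
  repeat destruct Hs as [Hs|Hs]; try contradiction; subst s;
  first [ descend (weight (And a b)) | descend (weight (Or a b))
        | descend (weight (Imp (Var p) a)) | descend (weight (Imp (Box a) b))
        | descend (weight (Imp a b)) | descend (weight (Box a))
        | descend (weight (Imp (And a b) c)) | descend (weight (Imp (Or a b) c))
        | descend (weight (Imp (Imp a b) c)) ].
Qed.

Lemma theta_lt_of_descends k s c : descends_at k s c -> shortlex_lt (Theta s) (Theta c).
Proof.
  intros [Hk [Hle Hlt]]; unfold Theta; apply (shortlex_of_upcount _ _ k Hk).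
  - intros m Hm; rewrite !theta_upcount; auto.
  - now rewrite !theta_upcount.
Qed.

Lemma descends_at_equiv k s s' c c' :
  seq_equiv s s' -> seq_equiv c c' -> descends_at k s' c' -> descends_at k s c.
Proof.
  intros Hs Hc [Hk [Hle Hlt]]; split; [exact Hk|].
  rewrite (seq_upcount_equiv k _ _ Hs), (seq_upcount_equiv k _ _ Hc).
  split; [|exact Hlt].
  intros m Hm; rewrite (seq_upcount_equiv m _ _ Hs), (seq_upcount_equiv m _ _ Hc); auto.
Qed.

Lemma Forall2_In_l {A B} (R : A -> B -> Prop) l1 l2 x :
  Forall2 R l1 l2 -> In x l1 -> exists y, In y l2 /\ R x y.
Proof.
  induction 1; cbn; [tauto|]. intros [<-|Hi]; [eauto|].
  destruct (IHForall2 Hi) as [z [? ?]]; eauto.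
Qed.

Theorem lemma3 : forall (ps : list sequent) (c : sequent),
  G4iSLt_rule ps c -> forall s, In s ps -> shortlex_lt (Theta s) (Theta c).
Proof.
  intros ps c [ps' [c' [Hrule [Hps Hc]]]] s Hs.
  destruct (Forall2_In_l _ _ _ _ Hps Hs) as [s' [Hs' Hss']].
  destruct (rule_descent _ _ Hrule s' Hs') as [k Hdesc].
  exact (theta_lt_of_descends k s c (descends_at_equiv _ _ _ _ _ Hss' Hc Hdesc)).
Qed.
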